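(* Let $P$ be a shortest path (a path of minimum length between its two end vertices) in a honeycomb toroidal graph $\mathrm{HTG}(m,n,\ell)$. Then all jump edges of $P$ are traversed in the same direction along $P$: either every jump edge of $P$ is traversed from its end $u_{m-1,j}$ to its end $u_{0,j+\ell}$, or every jump edge of $P$ is traversed from $u_{0,j+\ell}$ to $u_{m-1,j}$.
   Context: Honeycomb toroidal graph: let $m\ge 1$ be an integer, $n\ge 4$ an even integer, and $\ell$ an integer with $\ell\equiv m \pmod 2$. The graph $\mathrm{HTG}(m,n,\ell)$ has vertex set $\{u_{i,j}: 0\le i\le m-1,\ j\in\mathbb{Z}_n\}$ (second subscripts are taken modulo $n$; the vertices $u_{i,0},\dots,u_{i,n-1}$ form column $i$) and the following edges: vertical edges $u_{i,j}u_{i,j+1}$ for all $0\le i\le m-1$ and all $j$; flat edges $u_{i,j}u_{i+1,j}$ for $0\le i\le m-2$ and all $j$ with $i+j$ odd; jump edges $u_{m-1,j}u_{0,j+\ell}$ for all $j$ with $j\equiv m\pmod 2$. Only parameters for which this is a simple 3-regular graph are allowed (in particular, when $m=1$ one requires $\ell\not\equiv\pm1\pmod n$). For a jump edge $u_{m-1,j}u_{0,j+\ell}$ (with $j\equiv m\pmod 2$), $u_{m-1,j}$ is its column-$(m-1)$ end and $u_{0,j+\ell}$ its column-$0$ end, even when $m=1$. *)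

From mathcomp Require Import all_boot all_order all_algebra.
Set Implicit Arguments. Unset Strict Implicit. Unset Printing Implicit Defensive.
Import GRing.Theory Num.Theory.

(* Honeycomb toroidal graph HTG(m,n,l).  Vertex u_{i,j} is the pair (i,j)
   with i : 'I_m (column) and j : 'I_n (second subscript, taken mod n). *)
Definition htg_vertex (m n : nat) := ('I_m * 'I_n)%type.

Definition htg_vert (m n : nat) (x y : htg_vertex m n) : bool :=
  (x.1 == y.1) &&
  ((nat_of_ord y.2 == (x.2 + 1) %% n) || (nat_of_ord x.2 == (y.2 + 1) %% n)).

Definition htg_flat (m n : nat) (x y : htg_vertex m n) : bool :=
  [&& nat_of_ord y.1 == (x.1).+1, nat_of_ord x.2 == y.2 & odd (x.1 + x.2)].

(* jump edge u_{m-1,j} u_{0,j+l} with j = m (mod 2), traversed from its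
   column-(m-1) end x = u_{m-1,j} to its column-0 end y = u_{0,j+l}. *)
Definition htg_jump (m n : nat) (l : int) (x y : htg_vertex m n) : bool :=
  [&& nat_of_ord x.1 == m.-1, nat_of_ord y.1 == 0%N, odd x.2 == odd m &
      (n%:Z %| ((y.2)%:Z - (x.2)%:Z - l)%R)%Z].

Definition htg_is_jump (m n : nat) (l : int) (x y : htg_vertex m n) : bool :=
  htg_jump l x y || htg_jump l y x.

Definition htg_adj (m n : nat) (l : int) : rel (htg_vertex m n) :=
  fun x y => [|| htg_vert x y, htg_flat x y, htg_flat y x | htg_is_jump l x y].

(* admissible parameters: m >= 1, n >= 4 even, l = m (mod 2), and the graph
   is simple (the only obstruction: m = 1 and l = +-1 (mod n)). *)
Definition htg_params (m n : nat) (l : int) : Prop :=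
  [/\ (1 <= m)%N, (4 <= n)%N, ~~ odd n, (2 %| (l - m%:Z)%R)%Z &
      (m = 1%N -> ~~ (n%:Z %| (l - 1)%R)%Z /\ ~~ (n%:Z %| (l + 1)%R)%Z)].

Definition htg_path (m n : nat) (l : int) (x : htg_vertex m n) (p : seq (htg_vertex m n)) : bool :=
  path (htg_adj l) x p && uniq (x :: p).

Definition htg_shortest_path (m n : nat) (l : int) (x : htg_vertex m n) (p : seq (htg_vertex m n)) : Prop :=
  htg_path l x p /\
  forall q : seq (htg_vertex m n),
    path (htg_adj l) x q -> last x q = last x p -> (size p <= size q)%N.

From mathcomp Require Import all_boot all_order all_algebra.
From mathcomp Require Import zify.
Set Implicit Arguments. Unset Strict Implicit. Unset Printing Implicit Defensive.
Import GRing.Theory.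

(* For a column c and a shift t, the column projection
   u_{i,j} |-> u_{c,j+t} maps vertical edges to vertical edges and contracts
   flat edges, so it maps a jump-free walk to a walk that is no longer.  With
   c = m-1 and t = -l (mod n) it sends the column-0 end of every jump edge to
   its column-(m-1) end.  Hence if a walk traverses a jump forward a -> b, then
   a jump-free walk s from b to y, then a jump backward y -> z, the projection
   of s is a walk from a to z of length at most |s| < |s| + 2: the walk is not
   shortest.  Backward-then-forward is symmetric (column 0, shift t = l). *)

Section Walks.
Variables (m n : nat) (l : int).
Notation V := (htg_vertex m n).
Notation adj := (@htg_adj m n l).

Definition shortcut (x : V) (p : seq V) : Prop :=
  exists q, [/\ path adj x q, last x q = last x p & (size q < size p)%N].

Lemma shortcut_catl x pre r :
  path adj x pre -> shortcut (last x pre) r -> shortcut x (pre ++ r).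
Proof.
move=> pre_path [q [q_path q_last q_size]]; exists (pre ++ q).
by rewrite cat_path pre_path !last_cat !size_cat ltn_add2l.
Qed.

Lemma shortcut_catr x p r :
  shortcut x p -> path adj (last x p) r -> shortcut x (p ++ r).
Proof.
move=> [q [q_path q_last q_size]] r_path; exists (q ++ r).
by rewrite cat_path q_path q_last r_path !last_cat q_last !size_cat ltn_add2r.
Qed.

Definition nonjump (a b : V) : bool := adj a b && ~~ htg_is_jump l a b.

Lemma nonjump_adj a b : nonjump a b -> adj a b.
Proof. by case/andP. Qed.

Lemma jump_adj a b : htg_is_jump l a b -> adj a b.
Proof. by move=> jab; rewrite /htg_adj jab !orbT. Qed.

Section Projection.
Variable proj : V -> V.
Hypothesis proj_vert : forall a b, htg_vert a b -> adj (proj a) (proj b).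
Hypothesis proj_flat :
  forall a b, nat_of_ord a.2 = nat_of_ord b.2 -> proj a = proj b.

Lemma proj_walk v s : path nonjump v s ->
  exists q, [/\ path adj (proj v) q, last (proj v) q = proj (last v s)
              & (size q <= size s)%N].
Proof.
elim: s v => [|w s IH] v /=; first by exists [::].
case/andP=> /andP [vw_adj vw_nonjump] /IH [q [q_path q_last q_size]].
move: vw_adj; rewrite /htg_adj (negbTE vw_nonjump) orbF.
case/or3P=> [/proj_vert vw_edge | /and3P [_ /eqP vw_col _] | /and3P [_ /eqP wv_col _]].
- by exists (proj w :: q); split=> //=; rewrite q_path andbT.
- by exists q; rewrite (proj_flat vw_col) q_path q_last leqW.
- by exists q; rewrite (proj_flat (esym wv_col)) q_path q_last leqW.
Qed.

Section OppositeJumps.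
Variable J : rel V.
Hypothesis J_orient : forall a b, htg_is_jump l a b = J a b || J b a.
Hypothesis proj_J : forall a b, J a b -> proj b = a.

Lemma shortcut_opposite_jumps x0 y0 s z :
  J x0 y0 -> path nonjump y0 s -> J z (last y0 s) ->
  shortcut x0 (y0 :: rcons s z).
Proof.
move=> J0 /proj_walk [q [q_path q_last q_size]] Jz.
rewrite (proj_J J0) (proj_J Jz) in q_path q_last.
by exists q; rewrite /= last_rcons size_rcons ltnS leqW.
Qed.

Lemma shortcut_after_jump p y : path adj y p ->
  has (fun e => J e.2 e.1) (zip (y :: p) p) ->
  forall x0 y0 s, J x0 y0 -> path nonjump y0 s -> last y0 s = y ->
  shortcut x0 (y0 :: s ++ p).
Proof.
elim: p y => [|z p IH] y //= /andP [yz_adj p_path] against x0 y0 s J0 s_path s_last.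
case Jzy: (J z y) against => /= against.
  rewrite -cat_rcons -cat_cons; apply: shortcut_catr; last by rewrite /= last_rcons.
  by apply: shortcut_opposite_jumps; rewrite ?s_last.
case jyz: (htg_is_jump l y z).
  have Jyz : J y z by move: jyz; rewrite J_orient Jzy orbF.
  rewrite -cat_cons; apply: shortcut_catl; last first.
    by rewrite /= s_last; apply: (IH z p_path against y z [::]).
  rewrite /= jump_adj ?J_orient ?J0 //=.
  exact: (sub_path nonjump_adj s_path).
rewrite -cat_rcons; apply: (IH z p_path against x0 y0 _ J0); last by rewrite last_rcons.
by rewrite rcons_path s_path s_last /nonjump yz_adj jyz.
Qed.

End OppositeJumps.
End Projection.
End Walks.

Section ColumnProjection.
Variables (m n : nat) (l : int).
Hypothesis n_gt0 : (0 < n)%N.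
Notation V := (htg_vertex m n).

Definition col_proj (c : 'I_m) (t : nat) (v : V) : V :=
  (c, Ordinal (ltn_pmod (v.2 + t) n_gt0)).

Lemma col_proj_vert c t a b :
  htg_vert a b -> htg_adj l (col_proj c t a) (col_proj c t b).
Proof.
case/andP=> _ ab_vert; rewrite /htg_adj /htg_vert /= eqxx /=.
by case/orP: ab_vert => /eqP ->; rewrite !modnDml (addnAC _ 1) eqxx ?orbT.
Qed.

Lemma col_proj_flat c t a b :
  nat_of_ord a.2 = nat_of_ord b.2 -> col_proj c t a = col_proj c t b.
Proof. by move=> ab2; congr pair; apply: val_inj => /=; rewrite ab2. Qed.

Lemma ord_of_mod (a : 'I_n) (k : nat) :
  (n%:Z %| (k%:Z - a%:Z)%R)%Z -> Ordinal (ltn_pmod k n_gt0) = a.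
Proof.
rewrite -eqz_mod_dvd !modz_nat => /eqP [ka].
by apply: val_inj; rewrite /= ka modn_small.
Qed.

Lemma exists_shift (k : int) : exists t : nat, (n%:Z %| (t%:Z + k)%R)%Z.
Proof.
have : (0 <= ((- k) %% n)%Z)%R by apply: modz_ge0; rewrite eqz_nat -lt0n.
case E: ((- k) %% n)%Z => [t|] // _; exists t; rewrite -E.
by have /eqP := modz_mod (- k) n; rewrite eqz_mod_dvd opprK.
Qed.

Lemma col_proj_jump_fwd (c : 'I_m) (t : nat) :
  nat_of_ord c = m.-1 -> (n%:Z %| (t%:Z + l)%R)%Z ->
  forall a b, htg_jump l a b -> col_proj c t b = a.
Proof.
move=> c_last t_shift [a1 a2] [b1 b2] /and4P [/eqP a1_last _ _ ab_dvd].
congr pair; first by apply: val_inj; rewrite /= c_last a1_last.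
apply: ord_of_mod.
have -> : ((b2 + t)%N%:Z - a2%:Z = (b2%:Z - a2%:Z - l) + (t%:Z + l))%R by lia.
exact: rpredD.
Qed.

Lemma col_proj_jump_bwd (c : 'I_m) (t : nat) :
  nat_of_ord c = 0%N -> (n%:Z %| (t%:Z - l)%R)%Z ->
  forall a b, htg_jump l b a -> col_proj c t b = a.
Proof.
move=> c_first t_shift [a1 a2] [b1 b2] /and4P [_ /eqP a1_first _ ba_dvd].
congr pair; first by apply: val_inj; rewrite /= c_first a1_first.
apply: ord_of_mod.
have -> : ((b2 + t)%N%:Z - a2%:Z = - (a2%:Z - b2%:Z - l) + (t%:Z - l))%R by lia.
by rewrite rpredD ?rpredN.
Qed.

Hypothesis m_gt0 : (0 < m)%N.

Lemma shortcut_after_forward_jump (p : seq V) (y : V) : path (htg_adj l) y p ->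
  has (fun e => htg_jump l e.2 e.1) (zip (y :: p) p) ->
  forall x0 : V, htg_jump l x0 y -> shortcut l x0 (y :: p).
Proof.
move=> p_path against x0 jump0.
have m_last : (m.-1 < m)%N by rewrite ltn_predL.
have [t t_shift] := exists_shift l.
exact: (shortcut_after_jump (col_proj_vert (Ordinal m_last) t)
  (col_proj_flat (Ordinal m_last) t) (fun a b => erefl (htg_is_jump l a b))
  (col_proj_jump_fwd (c := Ordinal m_last) erefl t_shift)
  p_path against (s := [::]) jump0 isT erefl).
Qed.

Lemma shortcut_after_backward_jump (p : seq V) (y : V) : path (htg_adj l) y p ->
  has (fun e => htg_jump l e.1 e.2) (zip (y :: p) p) ->
  forall x0 : V, htg_jump l y x0 -> shortcut l x0 (y :: p).
Proof.
move=> p_path against x0 jump0.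
have [t t_shift] := exists_shift (- l).
exact: (shortcut_after_jump (col_proj_vert (Ordinal m_gt0) t)
  (col_proj_flat (Ordinal m_gt0) t) (J := fun a b => htg_jump l b a)
  (fun a b => orbC _ _) (col_proj_jump_bwd (c := Ordinal m_gt0) erefl t_shift)
  p_path against (s := [::]) jump0 isT erefl).
Qed.

(* A walk traversing jumps in both directions is not a shortest path: at its
   first jump edge one of the two lemmas above applies. *)
Lemma mixed_jumps_shortcut (x : V) (p : seq V) :
  path (htg_adj l) x p ->
  has (fun e => htg_is_jump l e.1 e.2 && ~~ htg_jump l e.1 e.2) (zip (x :: p) p) ->
  has (fun e => htg_is_jump l e.1 e.2 && ~~ htg_jump l e.2 e.1) (zip (x :: p) p) ->
  shortcut l x p.
Proof.
have bwd_edge es : has (fun e => htg_is_jump l e.1 e.2 && ~~ htg_jump l e.1 e.2) es ->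
    has (fun e => htg_jump l e.2 e.1) es.
  by apply: sub_has => -[a b]; rewrite /htg_is_jump /=; case: htg_jump; case: htg_jump.
have fwd_edge es : has (fun e => htg_is_jump l e.1 e.2 && ~~ htg_jump l e.2 e.1) es ->
    has (fun e => htg_jump l e.1 e.2) es.
  by apply: sub_has => -[a b]; rewrite /htg_is_jump /=; case: htg_jump; case: htg_jump.
elim: p x => [|y p IH] x //= /andP [xy_adj p_path].
case jxy: (htg_jump l x y) => /=; rewrite ?andbF /=.
  by move=> /bwd_edge bwd_only _; apply: shortcut_after_forward_jump.
case jyx: (htg_jump l y x) => /=; rewrite ?andbF /=.
  by move=> _ /fwd_edge fwd_only; apply: shortcut_after_backward_jump.
rewrite /htg_is_jump jxy jyx /= => bwd_only fwd_only.
by apply: (shortcut_catl (pre := [:: y])); rewrite /= ?xy_adj //; apply: IH.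
Qed.

End ColumnProjection.

Theorem lemma6p1 (m n : nat) (l : int) (x : htg_vertex m n) (p : seq (htg_vertex m n)) :
  htg_params m n l ->
  htg_shortest_path l x p ->
  (forall a b, (a, b) \in zip (x :: p) p -> htg_is_jump l a b -> htg_jump l a b) \/
  (forall a b, (a, b) \in zip (x :: p) p -> htg_is_jump l a b -> htg_jump l b a).
Proof.
case=> m_gt0 n_ge4 _ _ _ [/andP [p_path _] p_min].
have n_gt0 : (0 < n)%N by apply: leq_trans n_ge4.
pose all_jumps (J : rel (htg_vertex m n)) :=
  all (fun e => htg_is_jump l e.1 e.2 ==> J e.1 e.2) (zip (x :: p) p).
have [fwd|not_fwd] := boolP (all_jumps (htg_jump l)).
  by left=> a b ab_in ab_jump; have := allP fwd _ ab_in; rewrite /= ab_jump.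
have [bwd|not_bwd] := boolP (all_jumps (fun a b => htg_jump l b a)).
  by right=> a b ab_in ab_jump; have := allP bwd _ ab_in; rewrite /= ab_jump.
rewrite -!has_predC in not_fwd not_bwd.
have [q [q_path q_last q_size]] : shortcut l x p.
  apply: (mixed_jumps_shortcut n_gt0 m_gt0 p_path);
    by [apply: sub_has not_fwd => e /=; rewrite negb_imply
       |apply: sub_has not_bwd => e /=; rewrite negb_imply].
by have := p_min q q_path q_last; rewrite leqNgt q_size.
Qed.
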